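(* Let $G$ be a finite abelian group, $M$ a $\hat G$-linear, left inductive monoid, and $e$ a non-zero idempotent of $M$ with $\mathcal J$-class $J=\mathcal J_e$. Then there exists a positive integer $d$ such that $P(e)e\cong\hat G_J^{\oplus d}$ as right $\hat G$-linear $\hat G_J$-representations.
   Context: $\hat G=G\sqcup\{0\}$ with $0$ absorbing. $\mathrm{Vect}_{\hat G}$: objects are finite pointed sets with an action of $\hat G$ ($0v=0$, $g0=0$) such that $G$ acts freely on nonzero elements; morphisms $f$ satisfy $f(0)=0$, $f(gv)=gf(v)$, $f(v_1)=f(v_2)\neq0\Rightarrow Gv_1=Gv_2$; $\oplus$ is disjoint union with zeros identified. A $\hat G$-linear monoid is a finite monoid $M$ with absorbing element $0_M$ containing $G$ as a subgroup of units commuting with all of $M$, with $G$ acting freely by translation on $M\setminus\{0_M\}$. For $a\in M$, $J(a)=MaM$, $\mathcal J_a$ its $\mathcal J$-class ($a\sim b\iff J(a)=J(b)$), $I(a)=\{x\in J(a):MxM\neq J(a)\}$, $P(a)=(J(a)\setminus I(a))\cup\{0\}$ with product $xy$ if $xy\in J(a)\setminus I(a)$, else $0$. $M$ is left inductive if for every idempotent $e$, left translation by each $m\in M$ on $P(e)$ ($m\cdot x=mx$ if in $J(e)\setminus I(e)$, else $0$) makes $P(e)$ an $M$-representation by morphisms of $\mathrm{Vect}_{\hat G}$ with $0_M$ acting as zero and $g\in G$ as the scalar $g$. $G_J=eMe\cap J$ is a group with identity $e$, $\hat G_J=G_J\sqcup\{0\}$. $P(e)e=\{xe: x\in P(e)\}$,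 on which $\hat G_J$ acts on the right by multiplication in $P(e)$ and $G$ acts by scalars; $\hat G_J$ itself is a right $\hat G_J$-representation by right translation, and $\hat G_J^{\oplus d}$ is the direct sum of $d$ copies. *)

From mathcomp Require Import all_boot all_fingroup.
Set Implicit Arguments.
Unset Strict Implicit.
Unset Printing Implicit Defensive.

Section Vect.
Variable gT : finGroupType.

(* (PV, zV, actV) is an object of Vect_{\hat G}: a finite pointed set (the
   ambient types used below are finite) with a \hat G action, 0 fixed, and G
   acting freely on non-zero elements. *)
Definition vect_obj (V : Type) (PV : pred V) (zV : V) (actV : gT -> V -> V) : Prop :=
  [/\ PV zV, (forall g, actV g zV = zV),
      (forall g x, PV x -> PV (actV g x)),
      (forall x, PV x -> actV 1%g x = x) /\
      (forall g h x, PV x -> actV (g * h)%g x = actV g (actV h x)) &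
      (forall g x, PV x -> x <> zV -> actV g x = x -> g = 1%g)].

Definition vect_hom (V W : Type) (PV : pred V) (PW : pred W) (zV : V) (zW : W)
    (actV : gT -> V -> V) (actW : gT -> W -> W) (f : V -> W) : Prop :=
  [/\ (forall x, PV x -> PW (f x)),
      f zV = zW,
      (forall g x, PV x -> f (actV g x) = actW g (f x)) &
      (forall x y, PV x -> PV y -> f x = f y -> f x <> zW ->
         exists g, x = actV g y)].
End Vect.

Section Monoid.
Variables (gT : finGroupType) (M : finType) (mul : M -> M -> M) (one zero : M)
          (iota : gT -> M).

Definition is_Ghat_linear_monoid : Prop :=
  (forall x y z, mul x (mul y z) = mul (mul x y) z) /\
  (forall x, mul one x = x /\ mul x one = x) /\
  (forall x, mul zero x = zero /\ mul x zero = zero) /\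
  iota 1%g = one /\
  (forall g h, iota (g * h)%g = mul (iota g) (iota h)) /\
  injective iota /\
  (forall g m, mul (iota g) m = mul m (iota g)) /\
  (forall g m, m <> zero -> mul (iota g) m = m -> g = 1%g).

Definition Jset (a : M) : {set M} :=
  [set x | [exists u, [exists v, x == mul (mul u a) v]]].
Definition Iset (a : M) : {set M} := [set x in Jset a | Jset x != Jset a].
Definition Jclass (a : M) : {set M} := Jset a :\: Iset a.
Definition Pset (a : M) : {set M} := Jclass a :|: [set zero].
(* product in P(a) (also: left translation of m on P(a)) *)
Definition pmul (a x y : M) : M := if mul x y \in Jclass a then mul x y else zero.
Definition scal (g : gT) (x : M) : M := mul (iota g) x.

Definition left_inductive : Prop :=
  forall e, mul e e = e ->
    let P := fun x => x \in Pset e in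
    vect_obj P zero scal /\
    (forall m, vect_hom P P zero zero scal scal (pmul e m)) /\
    (forall x, P x -> pmul e one x = x) /\
    (forall m n x, P x -> pmul e (mul m n) x = pmul e m (pmul e n x)) /\
    (forall x, P x -> pmul e zero x = zero) /\
    (forall g x, P x -> pmul e (iota g) x = scal g x).

Definition GJ (e : M) : {set M} :=
  [set x in Jclass e | [exists m, x == mul (mul e m) e]].
Definition GJhat (e : M) : {set M} := GJ e :|: [set zero].

Definition PEe (e : M) : {set M} := [set pmul e x e | x in Pset e].

(* \hat G_J^{\oplus d}: None is 0, Some (i, h) is h in the i-th copy *)
Definition sumC (e : M) (d : nat) : pred (option ('I_d * M)) :=
  fun v => match v with None => true | Some (_, h) => h \in GJ e end.
Definition sum_scal (d : nat) (g : gT) (v : option ('I_d * M)) :=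
  match v with None => None | Some (i, h) => Some (i, mul (iota g) h) end.
Definition sum_ract (e : M) (d : nat) (v : option ('I_d * M)) (h : M) :=
  match v with
  | None => None
  | Some (i, x) => if pmul e x h == zero then None else Some (i, pmul e x h)
  end.

Definition PEe_iso_sum (e : M) (d : nat) : Prop :=
  exists (phi : M -> option ('I_d * M)) (psi : option ('I_d * M) -> M),
    let P := fun x => x \in PEe e in
    vect_hom P (@sumC e d) zero None scal (@sum_scal d) phi /\
    vect_hom (@sumC e d) P None zero (@sum_scal d) scal psi /\
    (forall x, P x -> psi (phi x) = x) /\
    (forall v, @sumC e d v -> phi (psi v) = v) /\
    (forall x h, P x -> h \in GJhat e -> phi (pmul e x h) = sum_ract e (phi x) h) /\
    (forall v h, @sumC e d v -> h \in GJhat e ->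
       psi (sum_ract e v h) = pmul e (psi v) h).
End Monoid.

From mathcomp Require Import all_boot all_fingroup.
Set Implicit Arguments.
Unset Strict Implicit.
Unset Printing Implicit Defensive.

(* An element [a] of [P(e)e \ {0}] lies in the J-class of [e] and satisfies
   [ae = a]; by stability of finite monoids (if [e = uaw] then already
   [e \in Ma]) it follows that [G_J] is a group acting freely on
   [P(e)e \ {0}] by right multiplication.  Choosing a representative [r_i] in
   each of the [d] orbits, [r_i h <-> (i, h)] is the required isomorphism, and
   [d > 0] because [e] itself lies in [P(e)e].  Since [G] is central,
   left multiplication by [G] commutes with this decomposition. *)

Lemma nat_fun_collision (T : finType) (f : nat -> T) :
  exists i j, i < j /\ f i = f j.
Proof.
pose g (k : 'I_#|T|.+1) := f k.
have /injectivePn [i [j neq_ij gij]] : ~~ injectiveb g.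
  by apply/injectiveP => /leq_card; rewrite card_ord ltnn.
case: (ltngtP i j) => [lt_ij|lt_ji|/val_inj eq_ij].
- by exists i, j.
- by exists j, i.
- by rewrite eq_ij eqxx in neq_ij.
Qed.

Section VectHom.
Variables (gT : finGroupType) (V W : Type) (PV : pred V) (PW : pred W).
Variables (zV : V) (zW : W) (actV : gT -> V -> V) (actW : gT -> W -> W).

Lemma vect_hom_inj (f : V -> W) :
  (forall x, PV x -> actV 1%g x = x) ->
  (forall x, PV x -> PW (f x)) -> f zV = zW ->
  (forall g x, PV x -> f (actV g x) = actW g (f x)) ->
  (forall x y, PV x -> PV y -> f x = f y -> x = y) ->
  vect_hom PV PW zV zW actV actW f.
Proof.
move=> act1 fP f0 fG f_inj; split=> // x y Px Py fxy _.
by exists 1%g; rewrite act1 // (f_inj x y).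
Qed.
End VectHom.

Section FiniteMonoid.
Variables (M : finType) (mul : M -> M -> M) (one : M).
Hypotheses (mulA : forall x y z, mul x (mul y z) = mul (mul x y) z)
  (mul1m : forall x, mul one x = x) (mulm1 : forall x, mul x one = x).

Definition mexp x n := iter n (mul x) one.

Lemma mexpD x m n : mexp x (m + n) = mul (mexp x m) (mexp x n).
Proof. by elim: m => [|m IHm]; rewrite ?mul1m // addSn /= IHm mulA. Qed.

Lemma mexpSr x n : mexp x n.+1 = mul (mexp x n) x.
Proof. by rewrite -addn1 mexpD /= mulm1. Qed.

Lemma mexp_sandwich p a w n :
  a = mul (mul p a) w -> a = mul (mul (mexp p n) a) (mexp w n).
Proof.
move=> a_pw; elim: n => [|n IHn] /=; first by rewrite mul1m mulm1.
rewrite -[mul w _]/(mexp w n.+1) mexpSr /= {1}a_pw {1}IHn.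
by rewrite !mulA.
Qed.

Lemma mexp_absorb p a w :
  a = mul (mul p a) w -> exists k, a = mul (mexp p k.+1) a.
Proof.
move=> a_pw; have [i [j [lt_ij wij]]] := nat_fun_collision (mexp w).
(* [a = p^i a w^i] and [w^i = w^j] give [a w^(j-i) = a]. *)
have a_wk : mul a (mexp w (j - i)) = a.
  rewrite {1}(mexp_sandwich i a_pw) -mulA -mexpD subnKC ?(ltnW lt_ij) //.
  by rewrite -wij -(mexp_sandwich i a_pw).
move: a_wk; rewrite -(subnSK lt_ij) => a_wk; exists (j - i.+1).
by rewrite {1}(mexp_sandwich (j - i.+1).+1 a_pw) -mulA a_wk.
Qed.

Lemma stable_left e a u w :
  mul a e = a -> e = mul (mul u a) w -> exists v, e = mul v a.
Proof.
move=> ae_a e_uaw.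
have [k e_pk] : exists k, e = mul (mexp (mul u a) k.+1) e.
  by apply: (mexp_absorb (w := w)); rewrite -(mulA u a e) ae_a.
by exists (mul (mexp (mul u a) k) u); rewrite {1}e_pk mexpSr -!mulA ae_a.
Qed.

End FiniteMonoid.

Section IdempotentJclass.
Variables (M : finType) (mul : M -> M -> M) (one zero : M).
Hypotheses (mulA : forall x y z, mul x (mul y z) = mul (mul x y) z)
  (mul1m : forall x, mul one x = x) (mulm1 : forall x, mul x one = x)
  (mul0m : forall x, mul zero x = zero) (mulm0 : forall x, mul x zero = zero).
Variable e : M.
Hypotheses (ee : mul e e = e) (e_neq0 : e <> zero).

Local Notation J := (Jclass mul e).
Local Notation G_J := (GJ mul e).

Lemma JsetP a x : reflect (exists u v, x = mul (mul u a) v) (x \in Jset mul a).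
Proof.
rewrite inE; apply: (iffP existsP) => [[u /existsP [v /eqP ->]]|[u [v ->]]].
  by exists u, v.
by exists u; apply/existsP; exists v.
Qed.

Lemma Jset_id a : a \in Jset mul a.
Proof. by apply/JsetP; exists one, one; rewrite mul1m mulm1. Qed.

Lemma Jset_trans a x y : y \in Jset mul x -> x \in Jset mul a -> y \in Jset mul a.
Proof.
move=> /JsetP [u1 [v1 ->]] /JsetP [u2 [v2 ->]].
by apply/JsetP; exists (mul u1 u2), (mul v2 v1); rewrite !mulA.
Qed.

Lemma JclassP x :
  reflect ((exists u v, x = mul (mul u e) v) /\ (exists u v, e = mul (mul u x) v))
          (x \in J).
Proof.
have -> : (x \in J) = (x \in Jset mul e) && (e \in Jset mul x).
  rewrite in_setD [x \in Iset _ _]in_set negb_and negbK.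
  case x_e: (x \in Jset mul e); rewrite ?andbF // andbT.
  apply/eqP/idP => [->|e_x]; first exact: Jset_id.
  by apply/setP => y; apply/idP/idP => /Jset_trans; [apply | apply].
by apply: (iffP andP) => -[/JsetP x_e /JsetP e_x].
Qed.

Lemma Jclass_id : e \in J.
Proof. by apply/JclassP; split; exists one, one; rewrite mul1m mulm1. Qed.

Lemma Jclass0 : zero \notin J.
Proof. by apply/JclassP => -[_ [u [v]]]; rewrite mulm0 mul0m. Qed.

(* The non-zero part of [P(e)e] (see [PEeE]); in a finite monoid it is the
   L-class of [e]. *)
Definition Lclass := [set a in J | mul a e == a].

Lemma LclassP a : reflect (a \in J /\ mul a e = a) (a \in Lclass).
Proof. by rewrite /Lclass in_set; apply: (iffP andP) => -[a_J /eqP]. Qed.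

Lemma Lclass0 : zero \notin Lclass.
Proof. by apply/LclassP => -[zero_J]; move: Jclass0; rewrite zero_J. Qed.

Lemma Lclass_id : e \in Lclass.
Proof. by apply/LclassP; split; [apply: Jclass_id |]. Qed.

Lemma Lclass_stable a : a \in Lclass -> exists v, e = mul v a.
Proof.
by case/LclassP => /JclassP [_ [u [w e_uaw]]] ae_a; apply: stable_left e_uaw.
Qed.

Lemma GJP h : reflect [/\ h \in J, mul e h = h & mul h e = h] (h \in G_J).
Proof.
rewrite /GJ in_set; apply: (iffP andP) => [[h_J /existsP [m /eqP h_eme]]|].
  by split=> //; rewrite h_eme; [rewrite !mulA ee | rewrite -mulA ee].
move=> [h_J eh_h he_h].
by split=> //; apply/existsP; exists h; rewrite eh_h he_h.
Qed.

Lemma GJ_Lclass h : h \in G_J -> h \in Lclass.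
Proof. by case/GJP => h_J _ he_h; apply/LclassP. Qed.

Lemma GJ_id : e \in G_J.
Proof. by apply/GJP; split; rewrite ?ee //; apply: Jclass_id. Qed.

Lemma GJ0 : zero \notin G_J.
Proof. by apply/negP => /GJ_Lclass; apply/negP/Lclass0. Qed.

Lemma GJ_linv h : h \in G_J -> exists2 h', h' \in G_J & mul h' h = e.
Proof.
move=> h_GJ; have [v e_vh] := Lclass_stable (GJ_Lclass h_GJ).
case/GJP: h_GJ => _ eh_h _.
have h'h_e : mul (mul (mul e v) e) h = e by rewrite -!mulA eh_h -e_vh ee.
exists (mul (mul e v) e) => //.
apply/GJP; split; [|by rewrite !mulA ee | by rewrite -mulA ee].
apply/JclassP; split; first by exists (mul e v), one; rewrite mulm1.
by exists one, h; rewrite mul1m h'h_e.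
Qed.

Lemma GJ_rinv h : h \in G_J -> exists2 h', h' \in G_J & mul h h' = e.
Proof.
move=> h_GJ; have [h' h'_GJ h'h_e] := GJ_linv h_GJ.
have [h'' /GJP [_ _ h''e] h''h'_e] := GJ_linv h'_GJ.
exists h' => //; suff -> : h = h'' by [].
by case/GJP: h_GJ => _ eh_h _; rewrite -eh_h -h''h'_e -mulA h'h_e h''e.
Qed.

Lemma GJ_mul h k : h \in G_J -> k \in G_J -> mul h k \in G_J.
Proof.
move=> h_GJ k_GJ; have [h' _ h'h_e] := GJ_linv h_GJ.
have [k' _ kk'_e] := GJ_rinv k_GJ.
case/GJP: h_GJ => _ eh_h he_h; case/GJP: k_GJ => _ _ ke_k.
apply/GJP; split; [| by rewrite mulA eh_h | by rewrite -mulA ke_k].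
apply/JclassP; split; first by exists h, k; rewrite he_h.
by exists h', k'; rewrite -!mulA kk'_e he_h h'h_e.
Qed.

Lemma Lclass_mulGJ a h : a \in Lclass -> h \in G_J -> mul a h \in Lclass.
Proof.
move=> a_L h_GJ; have [v e_va] := Lclass_stable a_L.
have [h' _ hh'_e] := GJ_rinv h_GJ.
case/LclassP: a_L => /JclassP [[u [w a_uew]] _] ae_a.
case/GJP: h_GJ => _ _ he_h.
apply/LclassP; split; last by rewrite -mulA he_h.
apply/JclassP; split; first by exists u, (mul w h); rewrite a_uew !mulA.
by exists v, h'; rewrite -mulA -(mulA a) hh'_e ae_a.
Qed.

Lemma Lclass_mulGJ_inj a h k :
  a \in Lclass -> h \in G_J -> k \in G_J -> mul a h = mul a k -> h = k.
Proof.
move=> a_L /GJP [_ eh_h _] /GJP [_ ek_k _] ah_ak.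
have [v e_va] := Lclass_stable a_L.
by rewrite -eh_h -ek_k e_va -!mulA ah_ak.
Qed.

Definition GJorbit a := [set mul a h | h in G_J].

Lemma GJorbit_id a : a \in Lclass -> a \in GJorbit a.
Proof. by case/LclassP => _ ae_a; apply/imsetP; exists e; [apply: GJ_id |]. Qed.

Lemma GJorbit_Lclass a b : a \in Lclass -> b \in GJorbit a -> b \in Lclass.
Proof. by move=> a_L /imsetP [h h_GJ ->]; apply: Lclass_mulGJ. Qed.

Lemma GJorbit_eq a b : a \in Lclass -> b \in GJorbit a -> GJorbit b = GJorbit a.
Proof.
move=> a_L /imsetP [h h_GJ ->]; have [h' h'_GJ hh'_e] := GJ_rinv h_GJ.
apply/setP => x; apply/imsetP/imsetP => -[k k_GJ ->].
  by exists (mul h k); [apply: GJ_mul | rewrite mulA].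
exists (mul h' k); first exact: GJ_mul.
by case/LclassP: a_L => _ ae_a; rewrite !mulA -(mulA a) hh'_e ae_a.
Qed.

Definition rep a := odflt a [pick b in GJorbit a].

Lemma rep_GJorbit a : a \in Lclass -> rep a \in GJorbit a.
Proof.
move=> a_L; rewrite /rep; case: pickP => //= no_b.
by have := no_b a; rewrite GJorbit_id.
Qed.

Lemma rep_Lclass a : a \in Lclass -> rep a \in Lclass.
Proof. by move=> a_L; apply: GJorbit_Lclass a_L (rep_GJorbit a_L). Qed.

Lemma rep_eq a b : a \in Lclass -> b \in GJorbit a -> rep b = rep a.
Proof.
move=> a_L b_a; rewrite /rep (GJorbit_eq a_L b_a).
by case: pickP => //= no_b; have := no_b a; rewrite GJorbit_id.
Qed.

Lemma rep_id a : a \in Lclass -> rep (rep a) = rep a.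
Proof. by move=> a_L; apply: rep_eq a_L (rep_GJorbit a_L). Qed.

Definition reps := [set rep a | a in Lclass].

Lemma reps_rep a : a \in Lclass -> rep a \in reps.
Proof. by move=> a_L; apply: imset_f. Qed.

Lemma repsP r : r \in reps -> r \in Lclass /\ rep r = r.
Proof. by case/imsetP => a a_L ->; rewrite rep_Lclass ?rep_id. Qed.

Lemma reps_gt0 : 0 < #|reps|.
Proof. by apply/card_gt0P; exists (rep e); apply: reps_rep Lclass_id. Qed.

Definition coef a := odflt e [pick h in G_J | a == mul (rep a) h].

Lemma coefP a : a \in Lclass -> coef a \in G_J /\ a = mul (rep a) (coef a).
Proof.
move=> a_L; have a_L' := rep_Lclass a_L.
have : a \in GJorbit (rep a) by rewrite (GJorbit_eq a_L (rep_GJorbit a_L)) GJorbit_id.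
case/imsetP => h h_GJ a_rh; rewrite /coef.
case: pickP => [k /andP [k_GJ /eqP a_rk] | /(_ h)] //=.
by rewrite h_GJ -a_rh eqxx.
Qed.

Lemma coef_rep_mul r h : r \in reps -> h \in G_J -> coef (mul r h) = h.
Proof.
move=> /repsP [r_L rep_r] h_GJ.
have rh_r : mul r h \in GJorbit r by apply: imset_f.
have [c_GJ rh_c] := coefP (GJorbit_Lclass r_L rh_r).
rewrite (rep_eq r_L rh_r) rep_r in rh_c.
by apply: (Lclass_mulGJ_inj r_L c_GJ h_GJ); rewrite -rh_c.
Qed.

Definition idx a : 'I_#|reps| := enum_rank_in (reps_rep Lclass_id) (rep a).

Lemma idx_rep a : a \in Lclass -> idx (rep a) = idx a.
Proof. by move=> a_L; rewrite /idx rep_id. Qed.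

Lemma idx_rep_mul r h : r \in reps -> h \in G_J -> idx (mul r h) = idx r.
Proof.
move=> /repsP [r_L _] h_GJ.
by rewrite /idx (rep_eq r_L (imset_f (fun k => mul r k) h_GJ)).
Qed.

Local Notation V := (option ('I_#|reps| * M)).

Definition phi (x : M) : V := if x \in Lclass then Some (idx x, coef x) else None.

Definition psi (v : V) : M := if v is Some (i, h) then mul (enum_val i) h else zero.

Lemma phi0 : phi zero = None.
Proof. by rewrite /phi (negbTE Lclass0). Qed.

Lemma phi_Lclass_mul a h :
  a \in Lclass -> h \in G_J -> phi (mul a h) = Some (idx a, mul (coef a) h).
Proof.
move=> a_L h_GJ; have [c_GJ a_rc] := coefP a_L.
have r_reps := reps_rep a_L; have ch_GJ := GJ_mul c_GJ h_GJ.
have -> : mul a h = mul (rep a) (mul (coef a) h) by rewrite {1}a_rc mulA.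
rewrite /phi Lclass_mulGJ ?rep_Lclass //.
by rewrite coef_rep_mul // idx_rep_mul // idx_rep.
Qed.

Lemma phi_Lclass a : a \in Lclass -> phi a = Some (idx a, coef a).
Proof. by rewrite /phi => ->. Qed.

Lemma psi_Lclass i h : h \in G_J -> psi (Some (i, h)) \in Lclass.
Proof. by move=> h_GJ; apply: Lclass_mulGJ h_GJ; case: (repsP (enum_valP i)). Qed.

Lemma psiK a : a \in Lclass -> psi (phi a) = a.
Proof.
move=> a_L; rewrite phi_Lclass //= /idx enum_rankK_in ?reps_rep //.
by case: (coefP a_L).
Qed.

Lemma phiK i h : h \in G_J -> phi (psi (Some (i, h))) = Some (i, h).
Proof.
move=> h_GJ; have r_reps := enum_valP i; have [r_L rep_r] := repsP r_reps.
rewrite /= /phi Lclass_mulGJ // coef_rep_mul // idx_rep_mul //.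
by rewrite /idx rep_r enum_valK_in.
Qed.

Lemma PEeE x : (x \in PEe mul zero e) = (x == zero) || (x \in Lclass).
Proof.
apply/imsetP/orP => [[y _ ->]|[/eqP ->|x_L]].
- rewrite /pmul; case: ifP => [ye_J|_]; last by left.
  by right; apply/LclassP; rewrite -mulA ee.
- by exists zero; rewrite ?inE ?eqxx ?orbT // /pmul mul0m (negbTE Jclass0).
- case/LclassP: (x_L) => x_J xe_x; exists x; first by rewrite inE x_J.
  by rewrite /pmul xe_x x_J.
Qed.

Lemma pmul0m x : pmul mul zero e zero x = zero.
Proof. by rewrite /pmul mul0m; case: ifP. Qed.

Lemma pmulm0 x : pmul mul zero e x zero = zero.
Proof. by rewrite /pmul mulm0; case: ifP. Qed.

Lemma pmul_Lclass_GJ a h : a \in Lclass -> h \in G_J -> pmul mul zero e a h = mul a h.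
Proof. by move=> a_L h_GJ; rewrite /pmul (LclassP _ (Lclass_mulGJ a_L h_GJ)).1. Qed.

Lemma sum_ract_GJ d (i : 'I_d) c h :
  c \in G_J -> h \in G_J -> sum_ract mul zero e (Some (i, c)) h = Some (i, mul c h).
Proof.
move=> c_GJ h_GJ; rewrite /= pmul_Lclass_GJ ?GJ_Lclass //.
by case: eqP => // ch0; move: (GJ_mul c_GJ h_GJ); rewrite ch0 (negbTE GJ0).
Qed.

Lemma sum_ract0 d (v : option ('I_d * M)) : sum_ract mul zero e v zero = None.
Proof. by case: v => [[i c]|] //=; rewrite pmulm0 eqxx. Qed.

Lemma phi_pmul x h : x \in PEe mul zero e -> h \in GJhat mul zero e ->
  phi (pmul mul zero e x h) = sum_ract mul zero e (phi x) h.
Proof.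
rewrite PEeE /GJhat in_setU in_set1 => /orP [/eqP ->|x_L] /orP [h_GJ|/eqP ->].
all: rewrite ?pmul0m ?pmulm0 ?sum_ract0 ?phi0 //.
rewrite pmul_Lclass_GJ // phi_Lclass_mul // phi_Lclass // sum_ract_GJ //.
by case: (coefP x_L).
Qed.

Lemma psi_ract (v : V) h : sumC mul e v -> h \in GJhat mul zero e ->
  psi (sum_ract mul zero e v h) = pmul mul zero e (psi v) h.
Proof.
rewrite /GJhat in_setU in_set1; case: v => [[i c] c_GJ|_] /orP [h_GJ|/eqP ->].
all: rewrite ?pmul0m ?pmulm0 ?sum_ract0 //.
by rewrite sum_ract_GJ // pmul_Lclass_GJ ?psi_Lclass //= mulA.
Qed.

Variables (gT : finGroupType) (iota : gT -> M).
Hypotheses (iota1 : iota 1%g = one)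
  (iotaM : forall g h, iota (g * h)%g = mul (iota g) (iota h))
  (iota_central : forall g m, mul (iota g) m = mul m (iota g)).

Lemma iota_e_GJ g : mul (iota g) e \in G_J.
Proof.
apply/GJP; split; [| by rewrite mulA -iota_central -mulA ee | by rewrite -mulA ee].
apply/JclassP; split; first by exists (iota g), one; rewrite mulm1.
by exists (iota g^-1), one; rewrite mulm1 mulA -iotaM mulVg iota1 mul1m.
Qed.

Lemma iota_Lclass g a : a \in Lclass -> mul (iota g) a = mul a (mul (iota g) e).
Proof.
by case/LclassP => _ ae_a; rewrite mulA -iota_central -mulA ae_a iota_central.
Qed.

Lemma phi_scal g x : x \in PEe mul zero e ->
  phi (scal mul iota g x) = sum_scal mul iota g (phi x).
Proof.
rewrite PEeE /scal => /orP [/eqP ->|x_L]; first by rewrite mulm0 phi0.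
have [c_GJ _] := coefP x_L.
rewrite iota_Lclass // phi_Lclass_mul ?iota_e_GJ // phi_Lclass //.
by rewrite -iota_Lclass ?GJ_Lclass.
Qed.

Lemma psi_scal g (v : V) : psi (sum_scal mul iota g v) = scal mul iota g (psi v).
Proof. by case: v => [[i h]|]; rewrite /scal /= ?mulm0 // mulA -iota_central -mulA. Qed.

Lemma PEe_iso_reps : PEe_iso_sum mul zero iota e #|reps|.
Proof.
have phiP x : x \in PEe mul zero e -> sumC mul e (phi x).
  rewrite PEeE => /orP [/eqP ->|x_L]; first by rewrite phi0.
  by rewrite phi_Lclass //; case: (coefP x_L).
have psiP v : sumC mul e v -> psi v \in PEe mul zero e.
  by rewrite PEeE; case: v => [[i h] h_GJ|_]; rewrite ?psi_Lclass ?orbT ?eqxx.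
have psiK_PEe x : x \in PEe mul zero e -> psi (phi x) = x.
  by rewrite PEeE => /orP [/eqP ->|/psiK //]; rewrite phi0.
have phiK_sumC v : sumC mul e v -> phi (psi v) = v.
  by case: v => [[i h] /phiK|_] //=; rewrite phi0.
exists phi, psi; split; [|split; [|split; [|split; [|split]]]] => //.
- apply: (vect_hom_inj _ phiP phi0 phi_scal) => [x _|x y x_P y_P phixy].
    by rewrite /scal iota1 mul1m.
  by rewrite -(psiK_PEe x) // phixy psiK_PEe.
- apply: (vect_hom_inj _ psiP erefl) => [[[i h]|] _|g v _|v w v_P w_P psivw].
  + by rewrite /= iota1 mul1m.
  + by [].
  + exact: psi_scal.
  by rewrite -(phiK_sumC v) // psivw phiK_sumC.
- exact: phi_pmul.
- exact: psi_ract.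
Qed.

End IdempotentJclass.

Theorem mainTheorem8 (gT : finGroupType) (M : finType) (mul : M -> M -> M)
    (one zero : M) (iota : gT -> M) :
  abelian [set: gT] ->
  is_Ghat_linear_monoid mul one zero iota ->
  left_inductive mul one zero iota ->
  forall e : M, mul e e = e -> e <> zero ->
  exists d : nat, (0 < d)%N /\ PEe_iso_sum mul zero iota e d.
Proof.
move=> _ [mulA [mul1 [mul0 [iota1 [iotaM [_ [iota_central _]]]]]]] _ e ee e_neq0.
have mul1m x : mul one x = x by case: (mul1 x).
have mulm1 x : mul x one = x by case: (mul1 x).
have mul0m x : mul zero x = zero by case: (mul0 x).
have mulm0 x : mul x zero = zero by case: (mul0 x).
exists #|reps mul e|; split; first exact: reps_gt0.
exact: PEe_iso_reps.
Qed.
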